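(* Let $\mathbb X=\langle\mathbb R,<\rangle$ be the real line and $\mathbb Y=\langle\mathbb R\setminus\mathbb Q,<\rangle$ the irrational line. Then $\mathbb X\equiv_{\infty\omega}\mathbb Y$ but $\mathbb X\not\sim_c\mathbb Y$.
   Context: A condensation from $\langle X,<\rangle$ onto $\langle Y,<\rangle$ is a bijection $F:X\to Y$ with $a<b\Rightarrow F(a)<F(b)$; $\mathbb X\sim_c\mathbb Y$ means condensations exist in both directions. $\equiv_{\infty\omega}$ is equivalence with respect to all $L_{\infty\omega}$-sentences. *)

From Stdlib Require Import Reals QArith.
Open Scope R_scope.

Definition condensation {X Y : Type} (ltX : X -> X -> Prop) (ltY : Y -> Y -> Prop)
  (F : X -> Y) : Prop :=
  (forall a b : X, F a = F b -> a = b) /\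
  (forall y : Y, exists x : X, F x = y) /\
  (forall a b : X, ltX a b -> ltY (F a) (F b)).

Definition condensable {X Y : Type} (ltX : X -> X -> Prop) (ltY : Y -> Y -> Prop) : Prop :=
  exists F : X -> Y, condensation ltX ltY F.

(* X ~_c Y : condensations exist in both directions. *)
Definition bicondensable {X Y : Type} (ltX : X -> X -> Prop) (ltY : Y -> Y -> Prop) : Prop :=
  condensable ltX ltY /\ condensable ltY ltX.

(* Formulas of L_{infinity omega} in the language {<} (with equality):
   variables are indexed by nat; conjunctions over arbitrary index types;
   negation; existential quantification over a single variable. *)
Inductive form : Type :=
| FLt : nat -> nat -> form
| FEq : nat -> nat -> form
| FNot : form -> form
| FAnd : forall I : Type, (I -> form) -> form
| FEx : nat -> form -> form.

Definition upd {X : Type} (a : nat -> X) (i : nat) (x : X) : nat -> X :=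
  fun n => if Nat.eqb n i then x else a n.

Fixpoint sat {X : Type} (lt : X -> X -> Prop) (a : nat -> X) (f : form) : Prop :=
  match f with
  | FLt i j => lt (a i) (a j)
  | FEq i j => a i = a j
  | FNot g => ~ sat lt a g
  | FAnd J fs => forall k : J, sat lt a (fs k)
  | FEx i g => exists x : X, sat lt (upd a i x) g
  end.

Fixpoint free (n : nat) (f : form) : Prop :=
  match f with
  | FLt i j => n = i \/ n = j
  | FEq i j => n = i \/ n = j
  | FNot g => free n g
  | FAnd J fs => exists k : J, free n (fs k)
  | FEx i g => n <> i /\ free n g
  end.

(* A sentence has no free variables (hence every subformula has only
   finitely many free variables, as required in L_{infinity omega}). *)
Definition sentence (f : form) : Prop := forall n, ~ free n f.

(* X ≡_{∞ω} Y : same L_{∞ω} sentences true (truth of a sentence does not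
   depend on the assignment). *)
Definition Linf_equiv {X Y : Type} (ltX : X -> X -> Prop) (ltY : Y -> Y -> Prop) : Prop :=
  forall f : form, sentence f ->
    forall (a : nat -> X) (b : nat -> Y), sat ltX a f <-> sat ltY b f.

Definition irrational (x : R) : Prop := ~ exists q : Q, Q2R q = x.
Definition Irr : Type := { x : R | irrational x }.
Definition Irr_lt (x y : Irr) : Prop := proj1_sig x < proj1_sig y.

(* Both lines are dense linear orders without endpoints, so finite partial
   isomorphisms between them can always be extended forth and back; by
   induction on formulas such partial isomorphisms preserve L_{oo omega}
   truth, which gives the equivalence.  A condensation v of R onto the
   irrationals would be a strictly increasing map with dense range; the
   supremum of {x | v x < 0} is then sent to 0, which is rational. *)

From Stdlib Require Import Reals QArith.
From Stdlib Require Import Qreals Lra Lia List Classical ProofIrrelevance ZArith.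
Import ListNotations.
Local Open Scope R_scope.

Record strict_linear_order {X : Type} (lt : X -> X -> Prop) : Prop := {
  slo_irrefl : forall x, ~ lt x x;
  slo_trans : forall x y z, lt x y -> lt y z -> lt x z;
  slo_total : forall x y, lt x y \/ x = y \/ lt y x }.

Record dense_linear_order {X : Type} (lt : X -> X -> Prop) : Prop := {
  dlo_linear : strict_linear_order lt;
  dlo_dense : forall x y, lt x y -> exists z, lt x z /\ lt z y;
  dlo_no_min : forall x, exists y, lt y x;
  dlo_no_max : forall x, exists y, lt x y;
  dlo_inhabited : inhabited X }.

Section StrictLinearOrder.

Context {X : Type} (lt : X -> X -> Prop).
Hypothesis Hlt : strict_linear_order lt.

Lemma slo_lt_asym x y : lt x y -> ~ lt y x /\ x <> y /\ y <> x.
Proof.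
  intros Hxy; repeat split.
  - intro Hyx; exact (slo_irrefl _ Hlt _ (slo_trans _ Hlt _ _ _ Hxy Hyx)).
  - intros ->; exact (slo_irrefl _ Hlt _ Hxy).
  - intros ->; exact (slo_irrefl _ Hlt _ Hxy).
Qed.

Lemma slo_lt_nlt_trans x y z : lt x y -> ~ lt z y -> lt x z.
Proof.
  intros Hxy Hzy; destruct (slo_total _ Hlt y z) as [Hyz|[<-|Hzy']];
    [exact (slo_trans _ Hlt _ _ _ Hxy Hyz) | exact Hxy | contradiction].
Qed.

Lemma slo_nlt_lt_trans x y z : ~ lt y x -> lt y z -> lt x z.
Proof.
  intros Hyx Hyz; destruct (slo_total _ Hlt x y) as [Hxy|[->|Hyx']];
    [exact (slo_trans _ Hlt _ _ _ Hxy Hyz) | exact Hyz | contradiction].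
Qed.

End StrictLinearOrder.

Lemma list_max_or_none {A : Type} (r : A -> A -> Prop) (P : A -> Prop)
    (r_irrefl : forall a, ~ r a a) (r_trans : forall a b c, r a b -> r b c -> r a c) l :
  (forall a, In a l -> ~ P a) \/
  exists m, In m l /\ P m /\ forall a, In a l -> P a -> ~ r m a.
Proof.
  induction l as [|a l [Hnone|[m [Hm [Pm Hmax]]]]].
  - left; intros a [].
  - destruct (classic (P a)) as [Pa|Pa].
    + right; exists a; repeat split; [now left | exact Pa |].
      intros b [<-|Hb] Pb; [apply r_irrefl | contradiction (Hnone b Hb Pb)].
    + left; intros b [<-|Hb]; auto.
  - destruct (classic (P a /\ r m a)) as [[Pa Rma]|Hm'].
    + right; exists a; repeat split; [now left | exact Pa |].
      intros b [<-|Hb] Pb Rab; [exact (r_irrefl _ Rab) |].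
      exact (Hmax b Hb Pb (r_trans _ _ _ Rma Rab)).
    + right; exists m; repeat split; [now right | exact Pm |].
      intros b [<-|Hb] Pb; [tauto | exact (Hmax b Hb Pb)].
Qed.

Section DenseCut.

Context {Y : Type} (lt : Y -> Y -> Prop).
Hypothesis Hlt : dense_linear_order lt.

Lemma dlo_fill_cut {A : Type} (g : A -> Y) (P : A -> Prop) (s : list A) :
  (forall a b, In a s -> In b s -> P a -> ~ P b -> lt (g a) (g b)) ->
  exists y, forall a, In a s -> (P a -> lt (g a) y) /\ (~ P a -> lt y (g a)).
Proof.
  intros Hcut; pose proof (dlo_linear _ Hlt) as Hl.
  assert (r_irrefl : forall a, ~ lt (g a) (g a)) by (intro; apply (slo_irrefl _ Hl)).
  destruct (list_max_or_none (fun a b => lt (g a) (g b)) P r_irrefl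
              (fun a b c => slo_trans _ Hl _ _ _) s) as [NoLow|[m [Hm [Pm Hmax]]]];
  destruct (list_max_or_none (fun a b => lt (g b) (g a)) (fun a => ~ P a) r_irrefl
              (fun a b c Hab Hbc => slo_trans _ Hl _ _ _ Hbc Hab) s)
    as [NoHigh|[M [HM [PM Hmin]]]].
  - destruct (dlo_inhabited _ Hlt) as [y]; exists y.
    intros a Ha; split; intro Pa; [contradiction (NoLow a Ha Pa)|].
    contradiction (NoHigh a Ha Pa).
  - destruct (dlo_no_min _ Hlt (g M)) as [y Hy]; exists y.
    intros a Ha; split; intro Pa; [contradiction (NoLow a Ha Pa)|].
    exact (slo_lt_nlt_trans _ Hl _ _ _ Hy (Hmin a Ha Pa)).
  - destruct (dlo_no_max _ Hlt (g m)) as [y Hy]; exists y.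
    intros a Ha; split; intro Pa; [|contradiction (NoHigh a Ha Pa)].
    exact (slo_nlt_lt_trans _ Hl _ _ _ (Hmax a Ha Pa) Hy).
  - destruct (dlo_dense _ Hlt _ _ (Hcut m M Hm HM Pm PM)) as [y [Hmy HyM]]; exists y.
    intros a Ha; split; intro Pa.
    + exact (slo_nlt_lt_trans _ Hl _ _ _ (Hmax a Ha Pa) Hmy).
    + exact (slo_lt_nlt_trans _ Hl _ _ _ HyM (Hmin a Ha Pa)).
Qed.

End DenseCut.

Section PartialIsomorphisms.

Context {X Y : Type} (ltX : X -> X -> Prop) (ltY : Y -> Y -> Prop).

Definition partial_iso (l : list (X * Y)) : Prop :=
  forall p q, In p l -> In q l ->
    (ltX (fst p) (fst q) <-> ltY (snd p) (snd q)) /\ (fst p = fst q <-> snd p = snd q).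

Lemma partial_iso_incl l l' : incl l l' -> partial_iso l' -> partial_iso l.
Proof. intros Hincl Hl' p q Hp Hq; apply Hl'; auto. Qed.

Lemma partial_iso_cons_In p l : In p l -> partial_iso l -> partial_iso (p :: l).
Proof. intros Hp; apply partial_iso_incl; intros q [<-|Hq]; auto. Qed.

Definition order_alike (x x' : X) (y y' : Y) : Prop :=
  (ltX x x' /\ ltY y y') \/ (x = x' /\ y = y') \/ (ltX x' x /\ ltY y' y).

Hypotheses (HX : strict_linear_order ltX) (HY : strict_linear_order ltY).

Lemma order_alike_iff x x' y y' : order_alike x x' y y' ->
  (ltX x x' <-> ltY y y') /\ (ltX x' x <-> ltY y' y) /\ (x = x' <-> y = y').
Proof.
  intros [[Hx Hy]|[[-> ->]|[Hx Hy]]].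
  - pose proof (slo_lt_asym _ HX _ _ Hx); pose proof (slo_lt_asym _ HY _ _ Hy); tauto.
  - pose proof (slo_irrefl _ HX x'); pose proof (slo_irrefl _ HY y'); tauto.
  - pose proof (slo_lt_asym _ HX _ _ Hx); pose proof (slo_lt_asym _ HY _ _ Hy); tauto.
Qed.

Lemma partial_iso_cons x y l : partial_iso l ->
  (forall q, In q l -> order_alike x (fst q) y (snd q)) -> partial_iso ((x, y) :: l).
Proof.
  intros Hl Halike p q [<-|Hp] [<-|Hq]; simpl.
  - pose proof (order_alike_iff x x y y (or_intror (or_introl (conj eq_refl eq_refl)))).
    tauto.
  - pose proof (order_alike_iff _ _ _ _ (Halike q Hq)); tauto.
  - pose proof (order_alike_iff _ _ _ _ (Halike p Hp)) as [Hlt [Hgt Heq]].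
    split; [tauto|]; split; intros E; symmetry; apply Heq; auto.
  - exact (Hl p q Hp Hq).
Qed.

Lemma partial_iso_forth (HY' : dense_linear_order ltY) l x :
  partial_iso l -> exists y, partial_iso ((x, y) :: l).
Proof.
  intros Hl.
  destruct (classic (exists p, In p l /\ fst p = x)) as [[[x' y] [Hp Hx]]|Hnew].
  { exists y; simpl in Hx; subst x'; exact (partial_iso_cons_In _ _ Hp Hl). }
  assert (Hside : forall q, In q l -> ltX (fst q) x \/ ltX x (fst q)).
  { intros q Hq; destruct (slo_total _ HX (fst q) x) as [H|[H|H]]; auto.
    exfalso; eauto. }
  destruct (dlo_fill_cut _ HY' snd (fun q => ltX (fst q) x) l) as [y Hy].
  { intros a b Ha Hb Hax Hbx; apply (Hl a b Ha Hb).
    destruct (Hside b Hb) as [H|H]; [contradiction | exact (slo_trans _ HX _ _ _ Hax H)]. }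
  exists y; apply partial_iso_cons; [exact Hl|].
  intros q Hq; destruct (Hside q Hq) as [H|H].
  - right; right; split; [exact H | exact (proj1 (Hy q Hq) H)].
  - left; split; [exact H|].
    apply (proj2 (Hy q Hq)); intro H'; exact (slo_irrefl _ HX _ (slo_trans _ HX _ _ _ H H')).
Qed.

End PartialIsomorphisms.

Definition swap_pair {X Y : Type} (p : X * Y) : Y * X := (snd p, fst p).

Lemma map_swap_pair_involutive {X Y : Type} (l : list (X * Y)) :
  map swap_pair (map swap_pair l) = l.
Proof. induction l as [|[x y] l IH]; simpl; [reflexivity | now rewrite IH]. Qed.

Lemma partial_iso_swap {X Y : Type} (ltX : X -> X -> Prop) (ltY : Y -> Y -> Prop) l :
  partial_iso ltX ltY l -> partial_iso ltY ltX (map swap_pair l).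
Proof.
  intros Hl p q Hp Hq.
  apply in_map_iff in Hp as [p' [<- Hp']]; apply in_map_iff in Hq as [q' [<- Hq']].
  pose proof (Hl _ _ Hp' Hq'); simpl; tauto.
Qed.

Lemma partial_iso_back {X Y : Type} (ltX : X -> X -> Prop) (ltY : Y -> Y -> Prop) :
  dense_linear_order ltX -> strict_linear_order ltY ->
  forall l y, partial_iso ltX ltY l -> exists x, partial_iso ltX ltY ((x, y) :: l).
Proof.
  intros HX HY l y Hl.
  destruct (partial_iso_forth _ _ HY (dlo_linear _ HX) HX _ y (partial_iso_swap _ _ _ Hl))
    as [x Hx].
  exists x; rewrite <- (map_swap_pair_involutive l).
  exact (partial_iso_swap _ _ ((y, x) :: map swap_pair l) Hx).
Qed.

Section BackAndForth.

Context {X Y : Type} (ltX : X -> X -> Prop) (ltY : Y -> Y -> Prop).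

Hypothesis forth : forall l x, partial_iso ltX ltY l -> exists y, partial_iso ltX ltY ((x, y) :: l).
Hypothesis back : forall l y, partial_iso ltX ltY l -> exists x, partial_iso ltX ltY ((x, y) :: l).

Definition assigned_pairs (a : nat -> X) (b : nat -> Y) (L : list nat) : list (X * Y) :=
  map (fun n => (a n, b n)) L.

Lemma assigned_pairs_upd a b L i x y :
  partial_iso ltX ltY ((x, y) :: assigned_pairs a b L) ->
  partial_iso ltX ltY (assigned_pairs (upd a i x) (upd b i y) (i :: L)).
Proof.
  apply partial_iso_incl; intros p Hp.
  apply in_map_iff in Hp as [n [<- Hn]]; unfold upd.
  destruct (Nat.eqb n i) eqn:E; [now left | right].
  apply (in_map (fun n => (a n, b n))).
  destruct Hn as [<-|Hn]; [rewrite Nat.eqb_refl in E; discriminate | exact Hn].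
Qed.

Lemma sat_partial_iso f : forall L a b,
  (forall n, free n f -> In n L) -> partial_iso ltX ltY (assigned_pairs a b L) ->
  (sat ltX a f <-> sat ltY b f).
Proof.
  induction f as [i j|i j|g IH|I fs IH|i g IH]; intros L a b HL Hiso; simpl.
  - exact (proj1 (Hiso _ _ (in_map _ _ _ (HL i (or_introl eq_refl)))
                           (in_map _ _ _ (HL j (or_intror eq_refl))))).
  - exact (proj2 (Hiso _ _ (in_map _ _ _ (HL i (or_introl eq_refl)))
                           (in_map _ _ _ (HL j (or_intror eq_refl))))).
  - rewrite (IH L a b HL Hiso); tauto.
  - assert (Hk : forall k, sat ltX a (fs k) <-> sat ltY b (fs k))
      by (intro k; exact (IH k L a b (fun n Hn => HL n (ex_intro _ k Hn)) Hiso)).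
    split; intros H k; apply Hk, H.
  - assert (HL' : forall n, free n g -> In n (i :: L)).
    { intros n Hn; destruct (Nat.eq_dec n i) as [->|Hni]; [now left|].
      right; apply HL; simpl; auto. }
    split.
    + intros [x Hx]; destruct (forth _ x Hiso) as [y Hy]; exists y.
      exact (proj1 (IH _ _ _ HL' (assigned_pairs_upd _ _ _ i _ _ Hy)) Hx).
    + intros [y Hy]; destruct (back _ y Hiso) as [x Hx]; exists x.
      exact (proj2 (IH _ _ _ HL' (assigned_pairs_upd _ _ _ i _ _ Hx)) Hy).
Qed.

Lemma Linf_equiv_of_back_and_forth : Linf_equiv ltX ltY.
Proof.
  intros f Hf a b; apply (sat_partial_iso f []).
  - intros n Hn; contradiction (Hf n Hn).
  - intros p q [].
Qed.

End BackAndForth.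

Theorem Linf_equiv_dense_linear_orders {X Y : Type} (ltX : X -> X -> Prop) (ltY : Y -> Y -> Prop) :
  dense_linear_order ltX -> dense_linear_order ltY -> Linf_equiv ltX ltY.
Proof.
  intros HX HY; apply Linf_equiv_of_back_and_forth.
  - intros l x; apply (partial_iso_forth _ _ (dlo_linear _ HX) (dlo_linear _ HY) HY).
  - intros l y; apply (partial_iso_back _ _ HX (dlo_linear _ HY)).
Qed.

Lemma Z_square_neq_twice_square d : (0 < d)%Z -> forall n, (n * n <> 2 * (d * d))%Z.
Proof.
  intros Hd; generalize Hd; pattern d; apply Z_lt_induction; [|lia].
  clear d Hd; intros d IH Hd n E.
  destruct (Zeven_odd_dec n) as [Hn|Hn].
  - destruct (Zeven_ex n Hn) as [m ->].
    destruct (Zeven_odd_dec d) as [Hd'|Hd'].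
    + destruct (Zeven_ex d Hd') as [e ->].
      apply (IH e ltac:(lia) ltac:(lia) m); nia.
    + destruct (Zodd_ex d Hd') as [e ->]; nia.
  - destruct (Zodd_ex n Hn) as [m ->]; nia.
Qed.

Lemma irrational_sqrt2 : irrational (sqrt 2).
Proof.
  intros [[n d] Hq].
  assert (H2 : Q2R ((n # d) * (n # d)) = Q2R (2 # 1)).
  { rewrite Q2R_mult, Hq, sqrt_sqrt by lra; unfold Q2R; simpl; lra. }
  apply eqR_Qeq in H2; unfold Qeq, Qmult in H2; simpl in H2.
  apply (Z_square_neq_twice_square (Zpos d) ltac:(lia) n); lia.
Qed.

Lemma sqrt2_bounds : 1 < sqrt 2 < 2.
Proof. pose proof (sqrt_sqrt 2 ltac:(lra)); pose proof (sqrt_pos 2); nra. Qed.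

Lemma irrational_between a b : a < b -> exists z, irrational z /\ a < z < b.
Proof.
  intros Hab; pose proof sqrt2_bounds; set (d := b - a).
  destruct (classic (irrational (a + d / 4))) as [I1|I1].
  { exists (a + d / 4); unfold d; split; [exact I1 | lra]. }
  destruct (classic (irrational (a + d / 2))) as [I2|I2].
  { exists (a + d / 2); unfold d; split; [exact I2 | lra]. }
  destruct (classic (irrational (a + d * (sqrt 2 / 2)))) as [I3|I3].
  { exists (a + d * (sqrt 2 / 2)); unfold d; split; [exact I3 | nra]. }
  exfalso; apply NNPP in I1, I2, I3.
  destruct I1 as [q1 E1], I2 as [q2 E2], I3 as [q3 E3].
  assert (Hq : ~ (q2 - q1 == 0)%Q).
  { intro E; apply Qeq_eqR in E; rewrite Q2R_minus, E1, E2 in E.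
    unfold Q2R in E; simpl in E; unfold d in E; lra. }
  (* With z1, z2, z3 the three points, sqrt 2 = ((z3 - z2) / (z2 - z1) + 2) / 2. *)
  apply irrational_sqrt2; exists (((q3 - q2) / (q2 - q1) + (2 # 1)) / (2 # 1))%Q.
  rewrite Q2R_div, Q2R_plus, Q2R_div, !Q2R_minus, E1, E2, E3
    by (try exact Hq; unfold Qeq; simpl; lia).
  unfold Q2R at 1 2; simpl; unfold d; field; lra.
Qed.

Lemma Rlt_dense_linear_order : dense_linear_order Rlt.
Proof.
  repeat split.
  - exact Rlt_irrefl.
  - exact Rlt_trans.
  - intros x y; destruct (Rtotal_order x y) as [H|[H|H]]; auto.
  - intros x y H; exists ((x + y) / 2); lra.
  - intros x; exists (x - 1); lra.
  - intros x; exists (x + 1); lra.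
  - exact 0.
Qed.

Lemma Irr_eq (x y : Irr) : proj1_sig x = proj1_sig y -> x = y.
Proof. destruct x, y; simpl; intros ->; f_equal; apply proof_irrelevance. Qed.

Lemma Irr_lt_between (x y : R) : x < y -> exists z : Irr, x < proj1_sig z < y.
Proof.
  intros Hxy; destruct (irrational_between x y Hxy) as [z [Hz Hxzy]].
  now exists (exist _ z Hz).
Qed.

Lemma Irr_lt_dense_linear_order : dense_linear_order Irr_lt.
Proof.
  unfold Irr_lt; repeat split.
  - intro x; apply Rlt_irrefl.
  - intros x y z; apply Rlt_trans.
  - intros x y; destruct (Rtotal_order (proj1_sig x) (proj1_sig y)) as [H|[H|H]]; auto.
    right; left; exact (Irr_eq _ _ H).
  - intros x y H; destruct (Irr_lt_between _ _ H) as [z Hz]; exists z; lra.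
  - intros x; destruct (Irr_lt_between (proj1_sig x - 1) (proj1_sig x) ltac:(lra)) as [z Hz].
    exists z; lra.
  - intros x; destruct (Irr_lt_between (proj1_sig x) (proj1_sig x + 1) ltac:(lra)) as [z Hz].
    exists z; lra.
  - exact (exist _ (sqrt 2) irrational_sqrt2).
Qed.

Lemma increasing_dense_range_surjective (v : R -> R) :
  (forall x y, x < y -> v x < v y) ->
  (forall a b, a < b -> exists x, a < v x < b) ->
  forall c, exists s, v s = c.
Proof.
  intros Hinc Hdense c.
  assert (Hrefl : forall x y, v x < v y -> x < y).
  { intros x y H; destruct (Rtotal_order x y) as [H'|[->|H']]; [exact H' | lra |].
    pose proof (Hinc _ _ H'); lra. }
  destruct (completeness (fun x => v x < c)) as [s [Hub Hlub]].
  - destruct (Hdense c (c + 1) ltac:(lra)) as [u Hu]; exists u.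
    intros x Hx; left; apply Hrefl; lra.
  - destruct (Hdense (c - 1) c ltac:(lra)) as [t Ht]; exists t; lra.
  - exists s; destruct (Rtotal_order (v s) c) as [H|[H|H]]; [| exact H |].
    + destruct (Hdense _ _ H) as [t Ht].
      assert (s < t) by (apply Hrefl; lra).
      assert (t <= s) by (apply Hub; lra).
      lra.
    + destruct (Hdense _ _ H) as [t Ht].
      assert (t < s) by (apply Hrefl; lra).
      assert (s <= t) by (apply Hlub; intros x Hx; left; apply Hrefl; lra).
      lra.
Qed.

Lemma not_condensable_R_Irr : ~ condensable Rlt Irr_lt.
Proof.
  intros [F [_ [Fsurj Fmono]]].
  destruct (increasing_dense_range_surjective (fun x => proj1_sig (F x)) Fmono) with (c := 0)
    as [s Hs].
  - intros a b Hab; destruct (Irr_lt_between a b Hab) as [z Hz].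
    destruct (Fsurj z) as [x <-]; now exists x.
  - apply (proj2_sig (F s)); exists 0%Q; rewrite Hs; unfold Q2R; simpl; lra.
Qed.

Theorem mainTheorem15 :
  Linf_equiv Rlt Irr_lt /\ ~ bicondensable Rlt Irr_lt.
Proof.
  split.
  - exact (Linf_equiv_dense_linear_orders _ _
             Rlt_dense_linear_order Irr_lt_dense_linear_order).
  - intros [HRIrr _]; exact (not_condensable_R_Irr HRIrr).
Qed.
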